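(* Let $\mathbb{K}$ be a field with $|\mathbb{K}|>2$ and let $(X,Z,\Xi,\Theta)$ be a dual split pre-Veronese set. The following are equivalent: (i) $\Theta=\emptyset$; (ii) for every $\xi\in\Xi$, the vertex $Y\cap\xi$ of $(X\cup Y)\cap\xi$ equals $Y$; (iii) there exists $\xi\in\Xi$ whose vertex $Y\cap\xi$ equals $Y$.
   Context: Let $\mathbb{K}$ be a field. For integers $R\ge1$, $V\ge -1$, an $(R,V)$-cone is a cone with a $V$-dimensional vertex (empty if $V=-1$) over a non-degenerate hyperbolic quadric in $\mathbb{P}^{2R+1}(\mathbb{K})$; the $(R,V)$-tube is the cone minus its vertex. Let $r,v,r',v'\ge -1$ be integers with $r'>r\ge1$, $d=2r+v+1$, $d'=2r'+v'+1$. Let $X,Z$ be point sets with $X\cup Z$ spanning $\mathbb{P}^N(\mathbb{K})$, $Y:=\langle Z\rangle$; $\Xi$ a family of $(d+1)$-dimensional subspaces with $|\Xi|>1$, $\Theta$ a possibly empty family of $(d'+1)$-dimensional subspaces such that: for $\xi\in\Xi$, $(X\cup Y)\cap\xi$ is an $(r,v)$-cone with vertex $Y\cap\xi$ and $X\cap\xi$ is its tube; for $\theta\in\Theta$, $(X\cup Y)\cap\theta$ is an $(r',v')$-cone $C_\theta$, $Y\cap\theta$ is a generator $M$ of $C_\theta$, $Z\cap\theta$ is the disjoint union of the vertex $V_\theta$ and an $r'$-space of $M$ complementary to $V_\theta$, and $X\cap\theta=C_\theta\setminus M$. A subspace is singular if all its points lie in $X\cup Y$; two points are collinear if the joining line is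 singular. Axioms: (S1) any two distinct points of $X\cup Z$ lie in a common member of $\Xi\cup\Theta$; (S2) the intersection of two distinct members of $\Xi\cup\Theta$ is singular. A dual split pre-Veronese set (pre-DSV) is such a quadruple satisfying (S1) and (S2). *)

(* Projective space P^N(K) is modelled on the row vectors
   'rV[K]_n with n = N+1: a projective point is represented by any nonzero
   vector, a (projective) subspace by a square matrix through its row space
   (mxalgebra), so "x lies in S" is (x <= S)%MS and projective dimension is
   \rank S - 1.  Point sets are predicates on vectors closed under nonzero
   scaling and not containing 0. *)
From mathcomp Require Import all_boot all_order all_algebra.
Set Implicit Arguments. Unset Strict Implicit. Unset Printing Implicit Defensive.
Import GRing.Theory.
Local Open Scope ring_scope.

Section Defs.
Variables (K : fieldType) (n : nat).

Definition is_pointset (P : 'rV[K]_n -> Prop) : Prop :=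
  (forall x, P x -> x != 0) /\
  (forall x c, P x -> c != 0 -> P (c *: x)).

Definition pts (S : 'M[K]_n) : 'rV[K]_n -> Prop :=
  fun x => x != 0 /\ (x <= S)%MS.

Definition is_span (Z : 'rV[K]_n -> Prop) (Y : 'M[K]_n) : Prop :=
  (forall z, Z z -> (z <= Y)%MS) /\
  (forall S : 'M[K]_n, (forall z, Z z -> (z <= S)%MS) -> (Y <= S)%MS).

Definition spans_all (P : 'rV[K]_n -> Prop) : Prop :=
  forall S : 'M[K]_n, (forall z, P z -> (z <= S)%MS) -> (1%:M <= S)%MS.

(* Standard hyperbolic quadratic form x0 x1 + x2 x3 + ... + x_{2R} x_{2R+1}
   on K^{2R+2}: its zero set is the non-degenerate hyperbolic quadric
   of P^{2R+1}(K) (up to projectivity). *)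
Definition hypq (R : nat) (a : 'rV[K]_(R.*2.+2)) : K :=
  \sum_(i < R.+1) a 0 (inord i.*2) * a 0 (inord i.*2.+1).

(* C is an (R,V)-cone spanning the subspace S, with vertex (the subspace) Vx,
   where Vn = V+1 is the vector dimension of the vertex (Vn = 0 <-> V = -1,
   empty vertex). *)
Definition is_cone (R Vn : nat) (S : 'M[K]_n) (C : 'rV[K]_n -> Prop)
    (Vx : 'M[K]_n) : Prop :=
  exists (E : 'M[K]_(R.*2.+2, n)) (F : 'M[K]_(Vn, n)),
    [/\ row_free (col_mx E F), (col_mx E F == S)%MS, (F == Vx)%MS &
     forall x, C x <->
       (x != 0 /\ exists a b, x = a *m E + b *m F /\ hypq a = 0)].

Definition is_generator (C : 'rV[K]_n -> Prop) (M : 'M[K]_n) : Prop :=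
  (forall x, pts M x -> C x) /\
  (forall M' : 'M[K]_n, (M <= M')%MS -> (forall x, pts M' x -> C x) ->
     (M' <= M)%MS).

Definition singular (X : 'rV[K]_n -> Prop) (Y S : 'M[K]_n) : Prop :=
  forall x, pts S x -> X x \/ (x <= Y)%MS.

Definition XYcap (X : 'rV[K]_n -> Prop) (Y S : 'M[K]_n) : 'rV[K]_n -> Prop :=
  fun x => (X x \/ pts Y x) /\ (x <= S)%MS.

(* Dual split pre-Veronese set (X, Z, Xi, Theta) with parameters
   r, v, r', v' where vn = v+1 and vn' = v'+1 (so v, v' >= -1 correspond to
   vn, vn' : nat), and Y = <Z>. *)
Definition is_preDSV (r vn r' vn' : nat) (X Z : 'rV[K]_n -> Prop) (Y : 'M[K]_n)
    (Xi Theta : 'M[K]_n -> Prop) : Prop :=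
  (1 <= r)%N /\ (r < r')%N /\ is_pointset X /\ is_pointset Z /\ is_span Z Y /\
   spans_all (fun x => X x \/ Z x) /\
   (exists xi1 xi2, [/\ Xi xi1, Xi xi2 & ~~ (xi1 == xi2)%MS]) /\
   (forall xi, Xi xi ->
      [/\ \rank xi = (r.*2.+2 + vn)%N,
          is_cone r vn xi (XYcap X Y xi) (Y :&: xi)%MS &
          forall x, (X x /\ (x <= xi)%MS) <->
                    (XYcap X Y xi x /\ ~~ (x <= Y :&: xi)%MS)]) /\
   (forall th, Theta th ->
      \rank th = (r'.*2.+2 + vn')%N /\
      exists Vth : 'M[K]_n,
        [/\ is_cone r' vn' th (XYcap X Y th) Vth,
            is_generator (XYcap X Y th) (Y :&: th)%MS,
            (exists W : 'M[K]_n,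
               [/\ \rank W = r'.+1, (W <= Y :&: th)%MS,
                   \rank (W :&: Vth)%MS = 0%N, (W + Vth == Y :&: th)%MS &
                   forall x, (Z x /\ (x <= th)%MS) <-> (pts Vth x \/ pts W x)]) &
            forall x, (X x /\ (x <= th)%MS) <->
                      (XYcap X Y th x /\ ~~ (x <= Y :&: th)%MS)]) /\
   (forall x y, (X x \/ Z x) -> (X y \/ Z y) -> ~~ (x == y)%MS ->
      exists S, (Xi S \/ Theta S) /\ (x <= S)%MS /\ (y <= S)%MS) /\
   (forall S1 S2, (Xi S1 \/ Theta S1) -> (Xi S2 \/ Theta S2) ->
      ~~ (S1 == S2)%MS -> singular X Y (S1 :&: S2)%MS).

End Defs.

From mathcomp Require Import all_boot all_order all_algebra zify.
Set Implicit Arguments. Unset Strict Implicit. Unset Printing Implicit Defensive.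
Import GRing.Theory.
Local Open Scope ring_scope.

(* Then, for a fixed pre-DSV, every member of Xi u Theta contains points of
   X, and the X-points of a member xi of Xi are never in Y.  This gives:
   (ii) <-> (iii), since all vertices Y :&: xi have the same rank;
   (ii) -> (i), since a Theta-member and a Xi-member containing Y cannot
   share an X-point, contradicting axiom (S1) for X-points of both; and
   (i) -> (ii): a point z of Z outside some xi lets us translate two
   X-points x, x' of xi by z and -z and join them by (S1) inside a member
   that meets xi in the non-singular point x + x', contradicting (S2). *)

Section HyperbolicForm.
Variables (K : fieldType) (R : nat).

Definition basis_row (k : nat) : 'rV[K]_(R.*2.+2) :=
  \row_(j < R.*2.+2) ((j : nat) == k)%:R.

Lemma hypq_scale (c : K) (a : 'rV[K]_(R.*2.+2)) :
  hypq (c *: a) = c ^+ 2 * hypq a.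
Proof.
rewrite /hypq mulr_sumr; apply: eq_bigr => i _.
by rewrite !mxE mulrACA expr2.
Qed.

Lemma hypq_basis0 : hypq (basis_row 0) = 0.
Proof.
apply: big1 => i _; rewrite !mxE (inordK (m := i.*2.+1)) /= ?mulr0 //.
by have := ltn_ord i; lia.
Qed.

Lemma hypq_basis1 : hypq (basis_row 1) = 0.
Proof.
apply: big1 => i _; rewrite !mxE (inordK (m := i.*2)); last by have := ltn_ord i; lia.
have -> : (i.*2 == 1)%N = false by lia.
by rewrite mul0r.
Qed.

Lemma hypq_basis01 : hypq (basis_row 0 + basis_row 1) = 1.
Proof.
rewrite /hypq big_ord_recl big1 ?addr0.
  by rewrite !mxE /= double0 !inordK //= addr0 add0r mulr1.
move=> i _; rewrite !mxE /= !inordK /= ?addr0 ?mul0r //;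
  have := ltn_ord i; rewrite /bump /=; lia.
Qed.

Lemma basis_row_neq0 k : (k < R.*2.+2)%N -> basis_row k != 0.
Proof.
move=> lt_k; apply/eqP => /matrixP /(_ 0 (Ordinal lt_k)).
by rewrite !mxE eqxx /= => /eqP; rewrite oner_eq0.
Qed.

End HyperbolicForm.

Section Cones.
Variables (K : fieldType) (n : nat).

Lemma col_mx_coord_uniq m1 m2 (E : 'M[K]_(m1, n)) (F : 'M_(m2, n))
    (a a' : 'rV_m1) (b b' : 'rV_m2) :
  row_free (col_mx E F) -> a *m E + b *m F = a' *m E + b' *m F ->
  a = a' /\ b = b'.
Proof.
move=> free_EF eq_ab; apply: eq_row_mx.
by apply: (row_free_inj free_EF); rewrite /= !mul_row_col.
Qed.

Lemma col_mx_notin_F m1 m2 (E : 'M[K]_(m1, n)) (F : 'M_(m2, n)) (a : 'rV_m1) :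
  row_free (col_mx E F) -> a != 0 -> ~~ (a *m E <= F)%MS.
Proof.
move=> free_EF; apply: contra => /submxP [D eq_aD].
have eq_aE : a *m E + 0 *m F = 0 *m E + D *m F.
  by rewrite !mul0mx addr0 add0r.
by have [-> _] := col_mx_coord_uniq free_EF eq_aE.
Qed.

Variables (R Vn : nat) (S : 'M[K]_n) (C : 'rV[K]_n -> Prop) (Vx : 'M[K]_n).
Hypothesis coneC : is_cone R Vn S C Vx.

Lemma cone_vertex_rank : \rank Vx = Vn.
Proof.
case: coneC => E [F [free_EF _ /eqmxP <- _]]; apply/eqP.
apply: inj_row_free => v vF0.
have eq0 : 0 *m E + v *m F = 0 *m E + 0 *m F by rewrite vF0 !mul0mx addr0.
by have [_ ->] := col_mx_coord_uniq free_EF eq0.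
Qed.

Lemma cone_secant : exists x x',
  [/\ C x, C x', ~~ (x <= Vx)%MS, ~~ (x' <= Vx)%MS &
      x + x' != 0 /\ ~ C (x + x')].
Proof.
case: coneC => E [F [free_EF _ /andP [_ VxF] coneE]].
have onC a : a != 0 -> hypq a = 0 -> C (a *m E).
  move=> a_neq0 qa; apply/coneE; split; last by exists a, 0; rewrite mul0mx addr0.
  by apply: contraNneq (col_mx_notin_F free_EF a_neq0) => ->; rewrite sub0mx.
have offVx (a : 'rV_(R.*2.+2)) : a != 0 -> ~~ (a *m E <= Vx)%MS.
  move=> a_neq0; apply: contraNN (col_mx_notin_F free_EF a_neq0).
  by move/submx_trans; apply.
have b0 := @basis_row_neq0 K R 0 isT.
have b1 := @basis_row_neq0 K R 1 isT.
have b01 : basis_row K R 0 + basis_row K R 1 != 0.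
  apply/eqP => b01_eq0; have := hypq_basis01 K R.
  rewrite b01_eq0 -(scale0r (0 : 'rV[K]_(R.*2.+2))) hypq_scale expr2 !mul0r.
  by move/eqP; rewrite eq_sym oner_eq0.
exists (basis_row K R 0 *m E), (basis_row K R 1 *m E); split.
- exact: onC b0 (hypq_basis0 _ _).
- exact: onC b1 (hypq_basis1 _ _).
- exact: offVx.
- exact: offVx.
rewrite -mulmxDl; split.
  by apply: contraNneq (col_mx_notin_F free_EF b01) => ->; rewrite sub0mx.
case/coneE => _ [a [b [eq_ab qa]]].
have eq_coord : (basis_row K R 0 + basis_row K R 1) *m E + 0 *m F = a *m E + b *m F.
  by rewrite mul0mx addr0.
have [eq_a _] := col_mx_coord_uniq free_EF eq_coord.
by move: qa; rewrite -eq_a hypq_basis01 => /eqP; rewrite oner_eq0.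
Qed.

Lemma cone_shift w c :
  C w -> (c <= Vx)%MS -> w + c != 0 -> C (w + c).
Proof.
case: coneC => E [F [free_EF _ /andP [_ VxF] coneE]].
case/coneE => _ [a [b [-> qa]]] cVx.
have /submxP [D ->] := submx_trans cVx VxF.
by move=> wc_neq0; apply/coneE; split => //; exists a, (b + D); rewrite mulmxDl addrA.
Qed.

Lemma cone_join_vertex p x :
  C p -> x != 0 -> (x <= Vx + p)%MS -> C x.
Proof.
case: coneC => E [F [free_EF _ /andP [_ VxF] coneE]].
case/coneE => _ [a [b [eq_p qa]]] x_neq0 /sub_addsmxP [[u v]] /= eq_x.
have /submxP [D eq_u] : (u *m Vx <= F)%MS by exact: submx_trans (submxMl u Vx) VxF.
apply/coneE; split => //; exists (v 0 0 *: a), (D + v 0 0 *: b); split.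
  rewrite eq_x eq_u eq_p {1}(mx11_scalar v) mul_scalar_mx scalerDr mulmxDl.
  by rewrite -!scalemxAl addrCA.
by rewrite hypq_scale qa mulr0.
Qed.

End Cones.

Section PreDSV.
Variables (K : fieldType) (n r vn r' vn' : nat).
Variables (X Z : 'rV[K]_n -> Prop) (Y : 'M[K]_n) (Xi Theta : 'M[K]_n -> Prop).
Hypothesis dsv : is_preDSV r vn r' vn' X Z Y Xi Theta.

Definition member (S : 'M[K]_n) : Prop := Xi S \/ Theta S.

Lemma Xi_nonempty : exists xi, Xi xi.
Proof. by case: dsv => _ [_ [_ [_ [_ [_ [[xi [_ [? _ _]]] _]]]]]]; exists xi. Qed.

Lemma Xi_cone xi : Xi xi -> is_cone r vn xi (XYcap X Y xi) (Y :&: xi)%MS.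
Proof. by case: dsv => _ [_ [_ [_ [_ [_ [_ [HXi _]]]]]]] /HXi []. Qed.

Lemma Xi_tube xi x : Xi xi ->
  (X x /\ (x <= xi)%MS) <-> (XYcap X Y xi x /\ ~~ (x <= Y :&: xi)%MS).
Proof. by case: dsv => _ [_ [_ [_ [_ [_ [_ [HXi _]]]]]]] /HXi []. Qed.

Lemma Theta_structure th : Theta th ->
  [/\ exists Vth, is_cone r' vn' th (XYcap X Y th) Vth,
      is_generator (XYcap X Y th) (Y :&: th)%MS &
      forall x, (X x /\ (x <= th)%MS) <->
                (XYcap X Y th x /\ ~~ (x <= Y :&: th)%MS)].
Proof.
case: dsv => _ [_ [_ [_ [_ [_ [_ [_ [HTh _]]]]]]]].
by case/HTh => _ [Vth [? ? _ ?]]; split => //; exists Vth.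
Qed.

Lemma dsv_S1 x y : X x \/ Z x -> X y \/ Z y -> ~~ (x == y)%MS ->
  exists S, [/\ member S, (x <= S)%MS & (y <= S)%MS].
Proof.
case: dsv => _ [_ [_ [_ [_ [_ [_ [_ [_ [HS1 _]]]]]]]]] Px Py /(HS1 x y Px Py).
by case=> S [? [? ?]]; exists S.
Qed.

Lemma dsv_span : is_span Z Y.
Proof. by case: dsv => _ [_ [_ [_ [? _]]]]. Qed.

Lemma meet_in_cone S T x : member S -> member T -> ~~ (S == T)%MS ->
  x != 0 -> (x <= S :&: T)%MS -> XYcap X Y T x.
Proof.
case: dsv => _ [_ [_ [_ [_ [_ [_ [_ [_ [_ HS2]]]]]]]]] mS mT neqST x_neq0 xST.
split; last exact: submx_trans xST (capmxSr _ _).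
by case: (HS2 S T mS mT neqST x (conj x_neq0 xST)) => [? | ?]; [left | right].
Qed.

Lemma Xi_tube_notY xi x : Xi xi -> X x -> (x <= xi)%MS -> ~~ (x <= Y)%MS.
Proof.
move=> Hxi Xx xxi; have [_] := proj1 (Xi_tube x Hxi) (conj Xx xxi).
by apply: contra => xY; rewrite sub_capmx xY.
Qed.

Lemma Xi_secant xi : Xi xi -> exists x x',
  [/\ X x /\ (x <= xi)%MS, X x' /\ (x' <= xi)%MS &
      x + x' != 0 /\ ~ XYcap X Y xi (x + x')].
Proof.
move=> Hxi; have [x [x' [Cx Cx' nVx nVx' sec]]] := cone_secant (Xi_cone Hxi).
exists x, x'; split => //.
- by have [_ xxi] := Cx; apply/(Xi_tube x Hxi).
- by have [_ x'xi] := Cx'; apply/(Xi_tube x' Hxi).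
Qed.

(* Every member of Theta contains an X-point: otherwise two cone points
   outside the vertex would both lie in the generator Y :&: th, and so would
   their sum, which is off the cone. *)
Lemma Theta_tube_point th : Theta th -> exists x, X x /\ (x <= th)%MS.
Proof.
case/Theta_structure => [[Vth coneth] [gen _] tube].
have [x [x' [Cx Cx' _ _ [sum_neq0 Csum]]]] := cone_secant coneth.
have [xM | xM] := boolP (x <= Y :&: th)%MS; last first.
  by exists x; apply/tube.
have [x'M | x'M] := boolP (x' <= Y :&: th)%MS; last first.
  by exists x'; apply/tube.
by case: Csum; apply: gen; split => //; apply: addmx_sub.
Qed.

Lemma generator_absorbs th M : Theta th -> (Y :&: th <= M)%MS ->
  (forall x, pts M x -> XYcap X Y th x) -> (M <= Y)%MS.
Proof.
by case/Theta_structure => _ [_ gen] _ YM /(gen M YM) /submx_trans; apply; exact: capmxSl.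
Qed.

Lemma Theta_Xi_no_common_X th xi p : Theta th -> Xi xi -> (Y <= xi)%MS ->
  X p -> (p <= th)%MS -> (p <= xi)%MS -> False.
Proof.
move=> Hth Hxi Yxi Xp pth pxi; have pnY := Xi_tube_notY Hxi Xp pxi.
have [eq_xi_th | neq_xi_th] := boolP (xi == th)%MS.
  have /andP [xi_th th_xi] := eq_xi_th.
  suff /(submx_trans (addsmxSr _ p)) : (Y :&: xi + p <= Y)%MS by rewrite (negbTE pnY).
  apply: (generator_absorbs Hth).
    exact: submx_trans (capmxS (submx_refl Y) th_xi) (addsmxSl _ _).
  move=> x [x_neq0 xM]; have [Cx xxi] := cone_join_vertex (Xi_cone Hxi)
    (conj (or_introl Xp) pxi) x_neq0 xM.
  by split => //; apply: submx_trans xxi xi_th.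
have p_meet : (p <= xi :&: th)%MS by rewrite sub_capmx pxi pth.
suff /(submx_trans p_meet) : (xi :&: th <= Y)%MS by rewrite (negbTE pnY).
apply: (generator_absorbs Hth); first exact: capmxS Yxi (submx_refl th).
by move=> x [x_neq0 xM]; apply: meet_in_cone (or_introl Hxi) (or_intror Hth) neq_xi_th x_neq0 xM.
Qed.

(* (ii) <-> (iii): all vertices Y :&: xi have rank vn. *)
Lemma vertex_Y_all_or_none :
  (forall xi, Xi xi -> (Y :&: xi == Y)%MS) <->
  (exists xi, Xi xi /\ (Y :&: xi == Y)%MS).
Proof.
split.
  by have [xi Hxi] := Xi_nonempty => all_Y; exists xi; split => //; apply: all_Y.
move=> [xi0 [Hxi0 /eqmxP eq0]] xi Hxi.
rewrite -(mxrank_leqif_eq (capmxSl Y xi)).2 (cone_vertex_rank (Xi_cone Hxi)).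
by rewrite -eq0 (cone_vertex_rank (Xi_cone Hxi0)).
Qed.

Lemma no_Theta_of_vertex_Y :
  (forall xi, Xi xi -> (Y :&: xi == Y)%MS) -> forall th, ~ Theta th.
Proof.
move=> all_Y th Hth.
have Ysub xi : Xi xi -> (Y <= xi)%MS.
  by move/all_Y/andP => [_ /submx_trans]; apply; exact: capmxSr.
have [x [Xx xth]] := Theta_tube_point Hth.
have [xi Hxi] := Xi_nonempty.
have [y [_ [[Xy yxi] _ _]]] := Xi_secant Hxi.
have [/andP [xy _] | neq_xy] := boolP (x == y)%MS.
  exact: (Theta_Xi_no_common_X Hth Hxi (Ysub _ Hxi) Xx xth (submx_trans xy yxi)).
have [S [[HS | HS] xS yS]] := dsv_S1 (or_introl Xx) (or_introl Xy) neq_xy.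
  exact: (Theta_Xi_no_common_X Hth HS (Ysub _ HS) Xx xth xS).
exact: (Theta_Xi_no_common_X HS Hxi (Ysub _ Hxi) Xy yS yxi).
Qed.

Lemma Xi_tube_shift xi3 w c : Xi xi3 -> X w -> (w <= xi3)%MS ->
  (c <= Y :&: xi3)%MS -> X (w + c).
Proof.
move=> Hxi3 Xw wxi3 cV; have wnY := Xi_tube_notY Hxi3 Xw wxi3.
have cY : (c <= Y)%MS := submx_trans cV (capmxSl _ _).
have wcnY : ~~ ((w + c)%R <= Y)%MS.
  apply: contraNN wnY => wcY; rewrite -[w](addrK c).
  by apply: addmx_sub; rewrite ?eqmx_opp.
have wc_neq0 : w + c != 0 by apply: contraNneq wcnY => ->; rewrite sub0mx.
have [Cwc _] := cone_shift (Xi_cone Hxi3) (conj (or_introl Xw) wxi3) cV wc_neq0.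
by case: Cwc => [// | [_ wcY]]; rewrite wcY in wcnY.
Qed.

Lemma vertex_Y_of_no_Theta :
  (forall th, ~ Theta th) -> forall xi, Xi xi -> (Y :&: xi == Y)%MS.
Proof.
move=> noTh xi Hxi.
suff Yxi : (Y <= xi)%MS by rewrite /eqmx capmxSl sub_capmx submx_refl.
have [spanZ minY] := dsv_span; apply: minY => z Zz.
apply: contraT => zxi; exfalso.
have [x [x' [[Xx xxi] [Xx' x'xi] [sum_neq0 Csum]]]] := Xi_secant Hxi.
(* Each X-point w of xi lies with z in a member xi3 of Xi, and there w + c
   is an X-point for every c in the vertex Y :&: xi3, in particular c = +-z. *)
have shifted w c : X w -> (w <= xi)%MS -> (c :=: z)%MS ->
    exists S, [/\ member S, X (w + c) & ((w + c)%R <= S)%MS].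
  move=> Xw wxi czE.
  have neq_wz : ~~ (w == z)%MS.
    by apply: contra zxi => /andP [_ zw]; apply: submx_trans zw wxi.
  have [S [[HS | HS] wS zS]] := dsv_S1 (or_introl Xw) (or_intror Zz) neq_wz; last first.
    by case: (noTh S).
  exists S; split; first by left.
    by apply: (Xi_tube_shift HS Xw wS); rewrite czE sub_capmx spanZ.
  by rewrite addmx_sub // czE.
have [Sp [mSp Xp pSp]] := shifted x z Xx xxi (eqmx_refl z).
have [_ [_ Xq _]] := shifted x' (- z) Xx' x'xi (eqmx_opp z).
set p := x + z in Xp pSp *; set q := x' + - z in Xq *.
have pq_sum : p + q = x + x' by rewrite /p /q addrACA subrr addr0.
(* No member contains both p and q: it would meet xi in the point x + x',
   which is off the cone of xi. *)
have no_member S : member S -> (p <= S)%MS -> (q <= S)%MS -> False.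
  move=> mS pS qS.
  have [/andP [S_xi _] | neq_S_xi] := boolP (S == xi)%MS.
    by move: zxi; rewrite -[z](addKr x) addmx_sub ?eqmx_opp // (submx_trans pS S_xi).
  apply: Csum; apply: meet_in_cone mS (or_introl Hxi) neq_S_xi sum_neq0 _.
  by rewrite sub_capmx -pq_sum addmx_sub //= pq_sum addmx_sub.
have [/andP [_ qp] | neq_pq] := boolP (p == q)%MS.
  exact: no_member mSp pSp (submx_trans qp pSp).
have [S [mS pS qS]] := dsv_S1 (or_introl Xp) (or_introl Xq) neq_pq.
exact: no_member mS pS qS.
Qed.

End PreDSV.

Theorem lemma4p16 (K : fieldType) (n : nat) (r vn r' vn' : nat)
    (X Z : 'rV[K]_n -> Prop) (Y : 'M[K]_n) (Xi Theta : 'M[K]_n -> Prop) :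
  (exists a : K, a != 0 /\ a != 1) ->
  is_preDSV r vn r' vn' X Z Y Xi Theta ->
  ((forall th, ~ Theta th) <-> (forall xi, Xi xi -> (Y :&: xi == Y)%MS)) /\
  ((forall xi, Xi xi -> (Y :&: xi == Y)%MS) <->
   (exists xi, Xi xi /\ (Y :&: xi == Y)%MS)).
Proof.
move=> _ dsv; split; last exact: vertex_Y_all_or_none dsv.
split; [exact: vertex_Y_of_no_Theta dsv | exact: no_Theta_of_vertex_Y dsv].
Qed.
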